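(* Let $\alpha>0$ and $g,h\in\mathbb{R}$ with $h>g$ and $g\neq 1$, and put $\gamma=h-g$, $\lambda=1-g$. Suppose there is an integer $N\geq 1$ with $N\gamma-g=-1$. Let $F_0\in(0,1)$ and $X_0\in\mathbb{R}$, and let $F$ be a differentiable function on an interval $I\ni X_0$ with values in $(0,1)$ satisfying $$\frac{dF}{dX}=\alpha\,(F^g-F^h),\qquad F(X_0)=F_0 .$$ Then for every $X\in I$, writing $F=F(X)$, $$X=X_0+\frac{1}{\alpha}\left[\ln\!\left(\frac{F}{F_0}\right)+\sum_{k=0,\,k\neq N}^{\infty}\frac{F^{k\gamma+\lambda}-F_0^{k\gamma+\lambda}}{k\gamma+\lambda}\right].$$
   Context: The equation $dF/dX=\alpha(F^g-F^h)$ with $\alpha>0$, $h>g$ defines the S-distribution ($F$ the cumulative distribution function). The existence of such an $N$ is equivalent to $g>1$ and $h=(1+N^{-1})g-N^{-1}$. *)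

From Stdlib Require Import Reals.
From Coquelicot Require Import Coquelicot.
Open Scope R_scope.

(* k-th term of the series  sum_{k>=0, k<>N} (F^{k g + l} - F0^{k g + l}) / (k g + l),
   with the excluded index k = N replaced by 0.  Real powers are Rpower
   (x^y = exp (y ln x), used only for x > 0). *)
Definition S_term (gam lam : R) (N : nat) (F F0 : R) (k : nat) : R :=
  if Nat.eq_dec k N then 0
  else (Rpower F (INR k * gam + lam) - Rpower F0 (INR k * gam + lam))
       / (INR k * gam + lam).

From Stdlib Require Import Reals Lra Lia.
From Coquelicot Require Import Coquelicot.
Open Scope R_scope.

(* With γ = h - g and λ = 1 - g, the derivatives u^(kγ+λ-1) of the terms of the
   series form a geometric progression of ratio u^γ, and the k = N term, of
   exponent 0, is ln u.  Hence the truncated primitive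
   Φ_n(u) = ln u + Σ_{k ≤ n, k ≠ N} u^(kγ+λ)/(kγ+λ) satisfies
   (u^g - u^h) Φ_n'(u) = 1 - u^((n+1)γ), so along a solution
   d/dX [Φ_n(F) - αX] = -α F^((n+1)γ).  Since F is increasing, F ≤ max(F0, F(X))
   between X0 and X, and the mean value theorem gives
   |Φ_n(F(X)) - Φ_n(F0) - α(X - X0)| ≤ α|X - X0| max(F0, F(X))^((n+1)γ) → 0. *)

Lemma Rpower_lt_rev u e1 e2 : 0 < u < 1 -> e1 < e2 -> Rpower u e2 < Rpower u e1.
Proof.
  intros Hu He. unfold Rpower. apply exp_increasing.
  assert (ln u < 0) by (rewrite <- ln_1; apply ln_increasing; lra).
  nra.
Qed.

Lemma Rpower_lt_1 u e : 0 < u < 1 -> 0 < e -> Rpower u e < 1.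
Proof. intros Hu He. rewrite <- (Rpower_O u) by lra. now apply Rpower_lt_rev. Qed.

Lemma Rbar_interval_convex (a b : Rbar) (x y z : R) :
  Rbar_lt a x -> Rbar_lt x b -> Rbar_lt a y -> Rbar_lt y b ->
  Rmin x y <= z <= Rmax x y -> Rbar_lt a z /\ Rbar_lt z b.
Proof.
  intros Hax Hxb Hay Hyb Hz. unfold Rmin, Rmax in Hz.
  destruct a, b; simpl in *; try tauto; destruct (Rle_dec x y); split; lra.
Qed.

Lemma sum_n_Rmult_l (c : R) (u : nat -> R) (n : nat) :
  sum_n (fun k => c * u k) n = c * sum_n u n.
Proof.
  induction n as [|n IH].
  - now rewrite !sum_O.
  - rewrite !sum_Sn, IH. unfold plus; simpl. ring.
Qed.

Lemma sum_n_Rminus (u v : nat -> R) (n : nat) :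
  sum_n (fun k => u k - v k) n = sum_n u n - sum_n v n.
Proof.
  induction n as [|n IH].
  - now rewrite !sum_O.
  - rewrite !sum_Sn, IH. unfold plus; simpl. ring.
Qed.

Lemma sum_n_geom_telescope (q : R) (n : nat) :
  (1 - q) * sum_n (pow q) n = 1 - q ^ S n.
Proof.
  induction n as [|n IH].
  - rewrite sum_O. simpl. ring.
  - rewrite sum_Sn. unfold plus; simpl.
    rewrite Rmult_plus_distr_l, IH. simpl. ring.
Qed.

Lemma sum_n_geom_Rpower (g h u : R) (n : nat) : 0 < u ->
  (Rpower u g - Rpower u h) *
    sum_n (fun k => Rpower u (INR k * (h - g) + (1 - g) - 1)) n
  = 1 - Rpower u (h - g) ^ S n.
Proof.
  intros Hu. set (q := Rpower u (h - g)).
  assert (Hterm : forall k, Rpower u (INR k * (h - g) + (1 - g) - 1)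
                            = Rpower u (- g) * q ^ k).
  { intros k. unfold q.
    rewrite <- Rpower_pow, Rpower_mult, <- Rpower_plus by (unfold Rpower; apply exp_pos).
    f_equal. ring. }
  rewrite (sum_n_ext _ _ n Hterm), sum_n_Rmult_l.
  assert (Hh : Rpower u h = Rpower u g * q).
  { unfold q. rewrite <- Rpower_plus. f_equal. ring. }
  assert (Hg : Rpower u g * Rpower u (- g) = 1).
  { rewrite <- Rpower_plus, Rplus_opp_r. now apply Rpower_O. }
  rewrite Hh, <- sum_n_geom_telescope.
  transitivity (Rpower u g * Rpower u (- g) * ((1 - q) * sum_n (pow q) n)); [ring|].
  rewrite Hg. ring.
Qed.

Lemma sum_n_indicator (c : R) (N n : nat) :
  sum_n (fun k => if Nat.eq_dec k N then c else 0) n = if N <=? n then c else 0.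
Proof.
  induction n as [|n IH].
  - rewrite sum_O. destruct N; reflexivity.
  - rewrite sum_Sn, IH.
    destruct (Nat.eq_dec (S n) N), (Nat.leb_spec N n), (Nat.leb_spec N (S n));
      try lia; unfold plus; simpl; lra.
Qed.

Lemma is_lim_seq_geom_bound (u : nat -> R) (l K q : R) :
  Rabs q < 1 -> (forall n, Rabs (u n - l) <= K * q ^ n) -> is_lim_seq u l.
Proof.
  intros Hq Hu.
  assert (HKq : is_lim_seq (fun n => K * q ^ n) 0).
  { replace (Finite 0) with (Rbar_mult K 0) by (simpl; f_equal; ring).
    apply is_lim_seq_scal_l, is_lim_seq_geom, Hq. }
  apply is_lim_seq_le_le with (fun n => l - K * q ^ n) (fun n => l + K * q ^ n).
  - intros n. apply Rabs_le_between', Hu.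
  - replace (Finite l) with (Finite (l - 0)) by (f_equal; ring).
    apply is_lim_seq_minus'; [apply is_lim_seq_const | exact HKq].
  - replace (Finite l) with (Finite (l + 0)) by (f_equal; ring).
    apply is_lim_seq_plus'; [apply is_lim_seq_const | exact HKq].
Qed.

Section SDistribution.

Variables (g h : R) (N : nat).
Hypothesis Hgh : g < h.
Hypothesis HN : INR N * (h - g) - g = -1.

Lemma exponent_neq_0 k : k <> N -> INR k * (h - g) + (1 - g) <> 0.
Proof.
  intros Hk E. apply Hk, INR_eq.
  assert (Hprod : (INR k - INR N) * (h - g) = 0) by lra.
  apply Rmult_integral in Hprod. destruct Hprod; lra.
Qed.

Definition prim_term (k : nat) (u : R) : R :=
  if Nat.eq_dec k N then ln u
  else Rpower u (INR k * (h - g) + (1 - g)) / (INR k * (h - g) + (1 - g)).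

Definition prim_sum (n : nat) (u : R) : R := sum_n (fun k => prim_term k u) n.

Lemma is_derive_prim_term k u : 0 < u ->
  is_derive (prim_term k) u (Rpower u (INR k * (h - g) + (1 - g) - 1)).
Proof.
  intros Hu. unfold prim_term. destruct (Nat.eq_dec k N) as [->|Hk].
  - replace (INR N * (h - g) + (1 - g) - 1) with (- (1)) by lra.
    rewrite Rpower_Ropp, Rpower_1 by lra. now apply is_derive_ln.
  - pose proof (exponent_neq_0 k Hk) as He.
    set (e := INR k * (h - g) + (1 - g)) in *.
    unfold Rpower. auto_derive; [lra|].
    replace ((e - 1) * ln u) with (e * ln u + - ln u) by ring.
    rewrite exp_plus, exp_Ropp, exp_ln by lra. field. lra.
Qed.

Lemma is_derive_prim_sum n u : 0 < u ->
  is_derive (prim_sum n) u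
    (sum_n (fun k => Rpower u (INR k * (h - g) + (1 - g) - 1)) n).
Proof.
  intros Hu. apply (is_derive_sum_n (fun k => prim_term k)).
  intros k _. now apply is_derive_prim_term.
Qed.

Lemma S_term_prim_term u v k : 0 < u -> 0 < v ->
  S_term (h - g) (1 - g) N u v k
  = prim_term k u - prim_term k v - (if Nat.eq_dec k N then ln (u / v) else 0).
Proof.
  intros Hu Hv. unfold S_term, prim_term. destruct (Nat.eq_dec k N).
  - rewrite ln_div by lra. ring.
  - unfold Rdiv. ring.
Qed.

Lemma sum_n_S_term u v n : (N <= n)%nat -> 0 < u -> 0 < v ->
  sum_n (S_term (h - g) (1 - g) N u v) n = prim_sum n u - prim_sum n v - ln (u / v).
Proof.
  intros Hn Hu Hv.
  rewrite (sum_n_ext _ _ n (fun k => S_term_prim_term u v k Hu Hv)).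
  rewrite !sum_n_Rminus, sum_n_indicator.
  destruct (Nat.leb_spec N n); [reflexivity | lia].
Qed.

Variables (alpha : R) (a b : Rbar) (F : R -> R).
Hypothesis Halpha : 0 < alpha.
Hypothesis HF01 : forall x : R, Rbar_lt a x -> Rbar_lt x b -> 0 < F x < 1.
Hypothesis HFd : forall x : R, Rbar_lt a x -> Rbar_lt x b ->
  is_derive F x (alpha * (Rpower (F x) g - Rpower (F x) h)).

Lemma S_solution_increasing (x y : R) :
  Rbar_lt a x -> Rbar_lt x b -> Rbar_lt a y -> Rbar_lt y b -> x <= y -> F x <= F y.
Proof.
  intros Hax Hxb Hay Hyb [Hxy | ->]; [|lra].
  left. apply (incr_function F a b (fun z => alpha * (Rpower (F z) g - Rpower (F z) h)));
    auto.
  intros z Haz Hzb. apply Rmult_lt_0_compat; [exact Halpha|].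
  apply Rlt_0_minus, Rpower_lt_rev; auto.
Qed.

Lemma S_solution_le_Rmax (x y c : R) :
  Rbar_lt a x -> Rbar_lt x b -> Rbar_lt a y -> Rbar_lt y b ->
  Rmin x y <= c <= Rmax x y -> F c <= Rmax (F x) (F y).
Proof.
  intros Hax Hxb Hay Hyb Hc.
  destruct (Rbar_interval_convex a b x y c Hax Hxb Hay Hyb Hc) as [Hac Hcb].
  destruct (Rle_dec x y).
  - rewrite Rmin_left, Rmax_right in Hc by lra.
    apply Rle_trans with (F y); [|apply Rmax_r].
    apply S_solution_increasing; tauto.
  - rewrite Rmin_right, Rmax_left in Hc by lra.
    apply Rle_trans with (F x); [|apply Rmax_l].
    apply S_solution_increasing; tauto.
Qed.

Lemma is_derive_truncation_error n (x : R) : Rbar_lt a x -> Rbar_lt x b ->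
  is_derive (fun y => prim_sum n (F y) - alpha * y) x
    (- alpha * Rpower (F x) (h - g) ^ S n).
Proof.
  intros Hax Hxb. destruct (HF01 x Hax Hxb) as [HFx _].
  replace (- alpha * Rpower (F x) (h - g) ^ S n) with
    (alpha * (Rpower (F x) g - Rpower (F x) h) *
       sum_n (fun k => Rpower (F x) (INR k * (h - g) + (1 - g) - 1)) n - alpha)
    by (rewrite Rmult_assoc, sum_n_geom_Rpower by exact HFx; ring).
  apply (is_derive_minus (fun y => prim_sum n (F y)) (fun y => alpha * y)).
  - apply (is_derive_comp (prim_sum n) F).
    + now apply is_derive_prim_sum.
    + now apply HFd.
  - auto_derive; trivial. ring.
Qed.

Lemma truncation_error_bound n (X0 X : R) :
  Rbar_lt a X0 -> Rbar_lt X0 b -> Rbar_lt a X -> Rbar_lt X b ->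
  Rabs (prim_sum n (F X) - prim_sum n (F X0) - alpha * (X - X0))
  <= alpha * Rabs (X - X0) * Rpower (Rmax (F X0) (F X)) (h - g) ^ S n.
Proof.
  intros HaX0 HX0b HaX HXb.
  set (phi := fun y => prim_sum n (F y) - alpha * y).
  destruct (MVT_abs phi (fun y => - alpha * Rpower (F y) (h - g) ^ S n) X0 X)
    as [c [Hphi Hc]].
  { intros c Hc. apply is_derive_Reals.
    destruct (Rbar_interval_convex a b X0 X c HaX0 HX0b HaX HXb Hc).
    now apply is_derive_truncation_error. }
  destruct (Rbar_interval_convex a b X0 X c HaX0 HX0b HaX HXb Hc) as [Hac Hcb].
  destruct (HF01 c Hac Hcb) as [HFc _].
  pose proof (S_solution_le_Rmax X0 X c HaX0 HX0b HaX HXb Hc) as HFc_max.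
  assert (Hpow : Rpower (F c) (h - g) ^ S n <= Rpower (Rmax (F X0) (F X)) (h - g) ^ S n).
  { apply pow_incr. split.
    - left. apply exp_pos.
    - apply Rle_Rpower_l; lra. }
  replace (prim_sum n (F X) - prim_sum n (F X0) - alpha * (X - X0)) with (phi X - phi X0)
    by (unfold phi; ring).
  rewrite Hphi, Rabs_mult, Rabs_Ropp, (Rabs_pos_eq alpha) by lra.
  rewrite (Rabs_pos_eq (_ ^ _)) by (apply pow_le; left; apply exp_pos).
  assert (0 <= alpha * Rabs (X - X0)) by (apply Rmult_le_pos; [lra | apply Rabs_pos]).
  nra.
Qed.

Lemma is_lim_prim_sum_diff (X0 X : R) :
  Rbar_lt a X0 -> Rbar_lt X0 b -> Rbar_lt a X -> Rbar_lt X b ->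
  is_lim_seq (fun n => prim_sum n (F X) - prim_sum n (F X0)) (alpha * (X - X0)).
Proof.
  intros HaX0 HX0b HaX HXb.
  set (m := Rpower (Rmax (F X0) (F X)) (h - g)).
  assert (Hm : 0 < m < 1).
  { split; [apply exp_pos|]. apply Rpower_lt_1; [|lra].
    unfold Rmax. destruct Rle_dec; auto. }
  apply (is_lim_seq_geom_bound _ _ (alpha * Rabs (X - X0) * m) m).
  - rewrite Rabs_pos_eq; lra.
  - intros n. eapply Rle_trans; [now apply truncation_error_bound|].
    right. simpl. fold m. ring.
Qed.

End SDistribution.

Theorem mainTheorem3
  (alpha g h : R) (N : nat) (F0 X0 : R) (a b : Rbar) (F : R -> R) :
  0 < alpha -> g < h -> g <> 1 ->
  (1 <= N)%nat -> INR N * (h - g) - g = -1 ->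
  0 < F0 < 1 ->
  Rbar_lt a X0 -> Rbar_lt X0 b ->
  (forall x : R, Rbar_lt a x -> Rbar_lt x b -> 0 < F x < 1) ->
  (forall x : R, Rbar_lt a x -> Rbar_lt x b ->
     is_derive F x (alpha * (Rpower (F x) g - Rpower (F x) h))) ->
  F X0 = F0 ->
  forall X : R, Rbar_lt a X -> Rbar_lt X b ->
    exists S : R,
      is_series (S_term (h - g) (1 - g) N (F X) F0) S /\
      X = X0 + / alpha * (ln (F X / F0) + S).
Proof.
  intros Halpha Hgh _ _ HN HF0 HaX0 HX0b HF01 HFd HFX0 X HaX HXb.
  destruct (HF01 X HaX HXb) as [HFX _].
  exists (alpha * (X - X0) - ln (F X / F0)). split.
  - apply (is_lim_seq_ext_loc
      (fun n => prim_sum g h N n (F X) - prim_sum g h N n F0 - ln (F X / F0)) _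
      (alpha * (X - X0) - ln (F X / F0))).
    + exists N. intros n Hn. symmetry. apply sum_n_S_term; auto; lra.
    + apply is_lim_seq_minus'; [|apply is_lim_seq_const].
      rewrite <- HFX0. now apply (is_lim_prim_sum_diff g h N Hgh HN alpha a b F).
  - field. lra.
Qed.
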